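(* Let $d \geq 2$. For all $n \geq 0$ and all $i,j \in [0,d-1]$, $$a_{j,d}(a_{i,d}(n)) = d\,a_{i,d}(n) + \overline{(j-i)}_d = \begin{cases} d\,a_{i,d}(n) + j - i & \text{if } j \geq i,\\ d\,a_{i,d}(n) + d + j - i & \text{if } j < i.\end{cases}$$
   Context: Let $d \geq 2$ be an integer. For an integer $x$, $\overline{(x)}_d$ denotes the unique integer in $[0,d-1]$ congruent to $x$ modulo $d$. For $n \geq 0$, $s_d(n)$ denotes the sum of the base-$d$ digits of $n$. For $j \in [0,d-1]$, $(a_{j,d}(n))_{n\geq 0}$ is the strictly increasing enumeration (indexed from $n=0$) of all nonnegative integers $k$ with $s_d(k) \equiv j \pmod d$. *)

From mathcomp Require Import all_boot.
Set Implicit Arguments. Unset Strict Implicit. Unset Printing Implicit Defensive.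

(* sum of base-d digits of n (d >= 2); fuel n suffices since n decreases *)
Fixpoint sdigits_aux (fuel d n : nat) : nat :=
  match fuel with
  | 0 => 0
  | fuel'.+1 => if n is 0 then 0 else n %% d + sdigits_aux fuel' d (n %/ d)
  end.
Definition s_d (d n : nat) : nat := sdigits_aux n.+1 d n.

Definition in_class (j d k : nat) : bool := s_d d k == j %[mod d].

(* a_{j,d}(n): the n-th (from 0) element, in increasing order, of
   {k | s_d(k) = j mod d}.  Each block [m*d, m*d+d) contains exactly one such
   k, so the first n+1 of them all lie below d*(n+1); hence the n-th element of
   the increasing enumeration equals the n-th element of the filtered list below. *)
Definition a_jd (j d n : nat) : nat :=
  nth 0 [seq k <- iota 0 (d * n.+1) | in_class j d k] n.

(* \overline{(x)}_d for an integer x = j - i with i,j in [0,d-1]: (j + d - i) mod d *)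
Definition resid_diff (d j i : nat) : nat := (j + d - i) %% d.

(* In base d, appending a digit r to m adds r to the digit sum, so each block
   [d m, d m + d) holds exactly one integer of every residue class of s_d, namely
   d m + (j - s_d m mod d).  Hence a_{j,d}(m) = d m + (j - s_d(m))_d.  Applied to
   m = a_{i,d}(n), whose digit sum is i mod d, this gives the theorem. *)
From mathcomp Require Import all_boot.
From mathcomp Require Import zify.

Section DigitSum.

Variables (d : nat) (hd : 1 < d).

Lemma sdigits_aux_fuel f1 f2 n : n < f1 -> n < f2 ->
  sdigits_aux f1 d n = sdigits_aux f2 d n.
Proof.
elim: f1 f2 n => [|f1 IH] [|f2] [|n] //= h1 h2.
have lt_div : n.+1 %/ d < n.+1 by apply: ltn_Pdiv.
by rewrite (IH f2) //; lia.
Qed.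

Lemma s_dE n : 0 < n -> s_d d n = n %% d + s_d d (n %/ d).
Proof.
case: n => [|n] // _; rewrite /s_d.
transitivity (n.+1 %% d + sdigits_aux n.+1 d (n.+1 %/ d)); first by [].
by congr (_ + _); apply: sdigits_aux_fuel; rewrite // ltn_Pdiv.
Qed.

Lemma s_dMD m r : r < d -> s_d d (d * m + r) = s_d d m + r.
Proof.
move=> lt_rd; have [m0 | m_gt0] := posnP m.
  rewrite m0 muln0 add0n; case: r lt_rd => [|r] // lt_rd.
  by rewrite s_dE // modn_small // divn_small //= addn0.
rewrite s_dE; last by nia.
rewrite mulnC modnMDl divnMDl ?(ltnW hd) // (modn_small lt_rd) divn_small //.
by rewrite addn0 addnC.
Qed.

Lemma resid_diff_lt j i : resid_diff d j i < d.
Proof. by rewrite ltn_mod; lia. Qed.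

Lemma resid_diffE j i : i < d -> j < d ->
  resid_diff d j i = if i <= j then j - i else d + j - i.
Proof.
move=> lt_id lt_jd; rewrite /resid_diff; case: leqP => le_ij.
- by rewrite -addnBAC // addnC modnDl modn_small //; lia.
- by rewrite modn_small; lia.
Qed.

Lemma eqn_modDl_resid t j r : t < d -> r < d ->
  (t + r == j %[mod d]) = (r == resid_diff d j (t %% d)).
Proof.
move=> lt_td lt_rd; rewrite (modn_small lt_td) /resid_diff.
have -> : j %% d = (t + (j + d - t)) %% d by rewrite subnKC ?modnDr //; lia.
by rewrite eqn_modDl (modn_small lt_rd).
Qed.

Lemma in_class_block j m r : r < d ->
  in_class j d (d * m + r) = (r == resid_diff d j (s_d d m %% d)).
Proof.
move=> lt_rd; rewrite /in_class s_dMD // -modnDml -[in RHS]modn_mod.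
by rewrite eqn_modDl_resid // ltn_mod; lia.
Qed.

Lemma filter_in_class_block j m :
  [seq k <- iota (d * m) d | in_class j d k] = [:: d * m + resid_diff d j (s_d d m %% d)].
Proof.
rewrite -[d * m]addn0 iotaDl addn0 filter_map.
rewrite (@eq_in_filter _ _ (pred1 (resid_diff d j (s_d d m %% d)))); last first.
  by move=> r; rewrite mem_iota add0n => lt_rd; rewrite /= in_class_block.
by rewrite filter_pred1_uniq ?iota_uniq // mem_iota resid_diff_lt.
Qed.

Lemma filter_in_class_iota j N :
  [seq k <- iota 0 (d * N) | in_class j d k] =
  [seq d * m + resid_diff d j (s_d d m %% d) | m <- iota 0 N].
Proof.
elim: N => [|N IH]; first by rewrite muln0.
rewrite mulnS addnC iotaD filter_cat IH filter_in_class_block.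
by rewrite -addn1 iotaD map_cat.
Qed.

Lemma a_jdE j n : a_jd j d n = d * n + resid_diff d j (s_d d n %% d).
Proof.
rewrite /a_jd filter_in_class_iota (nth_map 0) ?size_iota //.
by rewrite nth_iota.
Qed.

Lemma s_d_a_jd j n : j < d -> s_d d (a_jd j d n) %% d = j.
Proof.
move=> lt_jd; have := in_class_block j n _ (resid_diff_lt j (s_d d n %% d)).
by rewrite -a_jdE eqxx /in_class (modn_small lt_jd) => /eqP.
Qed.

End DigitSum.

Theorem theorem1 (d : nat) (hd : 2 <= d) (n i j : nat) (hi : i < d) (hj : j < d) :
  a_jd j d (a_jd i d n) = d * a_jd i d n + resid_diff d j i /\
  a_jd j d (a_jd i d n) =
    (if i <= j then d * a_jd i d n + j - i else d * a_jd i d n + d + j - i).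
Proof.
have a_ji : a_jd j d (a_jd i d n) = d * a_jd i d n + resid_diff d j i.
  by rewrite a_jdE // s_d_a_jd.
split=> //; rewrite a_ji resid_diffE //.
by case: leqP => le_ij; lia.
Qed.
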